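(* Let $K,T\subset\mathbb{R}^n$ be convex bodies with $T$ strictly convex and smooth. Let $q=(q_1,\dots,q_m)$ be a closed $(K,T)$-Minkowski billiard trajectory with closed dual billiard trajectory $p=(p_1,\dots,p_m)$ in $T$. Then $p$ is a closed polygonal curve (satisfying $p_j\neq p_{j+1}$ and $p_j\notin[p_{j-1},p_{j+1}]$ for all $j$) and is a closed $(T,-K)$-Minkowski billiard trajectory having $-q^{+1}:=(-q_2,\dots,-q_m,-q_1)$ as a closed dual billiard trajectory on $-K$.
   Context: A convex body is a compact convex set in $\mathbb{R}^n$ containing the origin in its interior; it is smooth if through each boundary point there is a unique supporting hyperplane. For a convex set $C$ and $z\in\partial C$, $N_C(z)=\{v:\langle v,y-z\rangle\le 0\ \forall y\in C\}$. A closed polygonal curve $(q_1,\dots,q_m)$, $m\ge2$, always satisfies $q_j\ne q_{j+1}$ and $q_j\notin[q_{j-1},q_{j+1}]$ (indices mod $m$). For convex bodies $A,B$, a closed polygonal curve $q$ with vertices on $\partial A$ is a closed $(A,B)$-Minkowski billiard trajectory if there are $p_1,\dots,p_m\in\partial B$ with $q_{j+1}-q_j\in N_B(p_j)$ and $p_{j+1}-p_j\in -N_A(q_{j+1})$ for all $j$; $p=(p_1,\dots,p_m)$ is called a closed dual billiard trajectory in $B$. *)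

From HB Require Import structures.
From mathcomp Require Import all_boot all_order all_algebra.
From mathcomp Require Import all_classical all_reals all_analysis.
Set Implicit Arguments. Unset Strict Implicit. Unset Printing Implicit Defensive.
Import Order.TTheory GRing.Theory Num.Theory.
Import numFieldNormedType.Exports.
Local Open Scope classical_set_scope.
Local Open Scope ring_scope.

Section Defs.
Variables (R : realType) (n : nat).
Notation vec := 'rV[R]_n.

Definition dotv (u v : vec) : R := (u *m v^T) 0 0.

Definition convex_set (C : set vec) : Prop :=
  forall x y t, C x -> C y -> 0 <= t <= 1 -> C (t *: x + (1 - t) *: y).

Definition convex_body (C : set vec) : Prop :=
  [/\ compact C, convex_set C & (interior C) 0].

Definition bdry (C : set vec) : set vec := closure C `\` interior C.

Definition normal_cone (C : set vec) (z : vec) : set vec :=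
  [set v | forall y, C y -> dotv v (y - z) <= 0].

Definition supporting_hyperplane (C : set vec) (z : vec) (H : set vec) : Prop :=
  exists2 v, (v != 0) /\ normal_cone C z v & H = [set x | dotv v x = dotv v z].

Definition smooth (C : set vec) : Prop :=
  forall z, bdry C z ->
    (exists H, supporting_hyperplane C z H) /\
    (forall H1 H2, supporting_hyperplane C z H1 -> supporting_hyperplane C z H2 -> H1 = H2).

Definition strictly_convex (C : set vec) : Prop :=
  forall x y t, C x -> C y -> x != y -> 0 < t < 1 ->
    (interior C) (t *: x + (1 - t) *: y).

Definition segment (a b : vec) : set vec :=
  [set x | exists2 t : R, 0 <= t <= 1 & x = (1 - t) *: a + t *: b].

Definition neg_set (C : set vec) : set vec := [set x | C (- x)].

(* closed polygonal curve (q_1,...,q_m), m >= 2, indices mod m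
   (ordS / ord_pred are the cyclic successor / predecessor on 'I_m) *)
Definition closed_polygonal (m : nat) (q : 'I_m -> vec) : Prop :=
  (2 <= m)%N /\
  forall j : 'I_m, q j != q (ordS j) /\ ~ segment (q (ord_pred j)) (q (ordS j)) (q j).

Definition dual_billiard_traj (A B : set vec) (m : nat) (q p : 'I_m -> vec) : Prop :=
  forall j : 'I_m,
    [/\ bdry B (p j),
        normal_cone B (p j) (q (ordS j) - q j) &
        normal_cone A (q (ordS j)) (- (p (ordS j) - p j))].

Definition minkowski_billiard (A B : set vec) (m : nat) (q : 'I_m -> vec) : Prop :=
  [/\ closed_polygonal q,
      forall j, bdry A (q j) &
      exists p, dual_billiard_traj A B q p].

End Defs.

(** The key fact is that in a smooth body the normal cone at a boundary point
    is a single ray. Hence, if two consecutive dual points [p_j = p_(j+1)]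
    coincided, the edges [q_(j+1) - q_j] and [q_(j+2) - q_(j+1)] would be
    positively proportional and [q_(j+1)] would lie on the segment
    [[q_j, q_(j+2)]], which a closed polygonal curve forbids. Strict convexity
    of [T] then excludes [p_j] from the open segment between its neighbours,
    since [p_j] is a boundary point. Finally the trajectory conditions for
    [(T, -K)] are the conditions for [(K, T)] read with the roles of [q] and
    [p] exchanged, after the reflection [x |-> -x]. *)
From HB Require Import structures.
From mathcomp Require Import all_boot all_order all_algebra.
From mathcomp Require Import all_classical all_reals all_analysis.
From mathcomp Require Import ring.
Set Implicit Arguments. Unset Strict Implicit. Unset Printing Implicit Defensive.
Import Order.TTheory GRing.Theory Num.Theory.
Import numFieldNormedType.Exports.
Local Open Scope classical_set_scope.
Local Open Scope ring_scope.

Section MinkowskiBilliardDuality.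
Variables (R : realType) (n : nat).
Implicit Types (a b r u v w x y z : 'rV[R]_n) (C : set 'rV[R]_n).

Lemma dotvE u v : dotv u v = \sum_i u 0 i * v 0 i.
Proof. by rewrite /dotv mxE; apply: eq_bigr => i _; rewrite mxE. Qed.

Lemma dotvC u v : dotv u v = dotv v u.
Proof. by rewrite !dotvE; apply: eq_bigr => i _; rewrite mulrC. Qed.

Lemma dotvDr u v w : dotv u (v + w) = dotv u v + dotv u w.
Proof. by rewrite !dotvE -big_split; apply: eq_bigr => i _; rewrite mxE mulrDr. Qed.

Lemma dotvZr u k v : dotv u (k *: v) = k * dotv u v.
Proof. by rewrite !dotvE mulr_sumr; apply: eq_bigr => i _; rewrite mxE mulrCA. Qed.

Lemma dotvNr u v : dotv u (- v) = - dotv u v.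
Proof. by rewrite -scaleN1r dotvZr mulN1r. Qed.

Lemma dotvBr u v w : dotv u (v - w) = dotv u v - dotv u w.
Proof. by rewrite dotvDr dotvNr. Qed.

Lemma dotvZl u k v : dotv (k *: v) u = k * dotv v u.
Proof. by rewrite dotvC dotvZr dotvC. Qed.

Lemma dotvNl u v : dotv (- v) u = - dotv v u.
Proof. by rewrite dotvC dotvNr dotvC. Qed.

Lemma dotvBl u v w : dotv (v - w) u = dotv v u - dotv w u.
Proof. by rewrite dotvC dotvBr !(dotvC u). Qed.

Lemma dotvv_eq0 u : dotv u u = 0 -> u = 0.
Proof.
rewrite dotvE => /eqP; rewrite psumr_eq0; last by move=> i _; rewrite -expr2 sqr_ge0.
move=> /allP u2_eq0; apply/rowP => i; rewrite mxE.
by have /implyP/(_ isT) := u2_eq0 i (mem_index_enum i); rewrite mulf_eq0 orbb => /eqP.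
Qed.

Lemma interior0_scale C v : interior C 0 -> exists2 e : R, 0 < e & C (e *: v).
Proof.
move=> C0; have /(_ C) := @scalel_continuous R 'rV[R]_n v 0.
rewrite scale0r => /(_ C0) /nbhs_ballP [e e_gt0 ballC].
exists (e / 2); first by rewrite divr_gt0.
apply: ballC; rewrite /ball /= sub0r normrN gtr0_norm ?divr_gt0 //.
by rewrite ltr_pdivrMr // ltr_pMr // ltr1n.
Qed.

Lemma normal_coneZ C z k v :
  0 <= k -> normal_cone C z v -> normal_cone C z (k *: v).
Proof. by move=> k_ge0 Nv y Cy; rewrite dotvZl mulr_ge0_le0 ?Nv. Qed.

(* The component [u] of [w] orthogonal to [v] is parallel to the common
   hyperplane, hence orthogonal to [w] as well, so it vanishes. *)
Lemma hyperplane_eq_parallel z v w : v != 0 ->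
  [set x | dotv v x = dotv v z] = [set x | dotv w x = dotv w z] ->
  w = (dotv v w / dotv v v) *: v.
Proof.
move=> v_neq0 hyp_eq; set u := dotv v v *: w - dotv v w *: v.
have vu : dotv v u = 0 by rewrite /u dotvBr !dotvZr (dotvC v w) mulrC subrr.
have wu : dotv w u = 0.
  have : [set x | dotv v x = dotv v z] (z + u) by rewrite /= dotvDr vu addr0.
  by rewrite hyp_eq /= dotvDr => /eqP; rewrite -subr_eq0 addrC addKr => /eqP.
have /eqP : u = 0 by apply: dotvv_eq0; rewrite {1}/u dotvBl !dotvZl vu wu !mulr0 subrr.
have vv_neq0 : dotv v v != 0 by apply: contra v_neq0 => /eqP /dotvv_eq0 ->.
by rewrite subr_eq0 => /eqP uE; rewrite mulrC -scalerA -uE scalerA mulVf ?scale1r.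
Qed.

Lemma normal_cone_opp_eq0 C z v : interior C 0 ->
  normal_cone C z v -> normal_cone C z (- v) -> v = 0.
Proof.
move=> C0 Nv NNv.
have orth y : C y -> dotv v (y - z) = 0.
  by move=> Cy; apply/eqP; rewrite eq_le Nv //= -oppr_le0 -dotvNl NNv.
have /eqP := orth _ (nbhs_singleton C0).
rewrite sub0r dotvNr oppr_eq0 => /eqP vz.
have [e e_gt0 Cev] := interior0_scale v C0.
have /eqP := orth _ Cev; rewrite dotvBr vz subr0 dotvZr mulf_eq0 gt_eqF //=.
by move/eqP/dotvv_eq0.
Qed.

Lemma smooth_normal_cone_ray C z v w :
  smooth C -> interior C 0 -> bdry C z -> v != 0 -> w != 0 ->
  normal_cone C z v -> normal_cone C z w -> exists2 c : R, 0 < c & w = c *: v.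
Proof.
move=> smoothC C0 Cz v_neq0 w_neq0 Nv Nw.
have [_ /(_ _ _ (ex_intro2 _ _ v (conj v_neq0 Nv) erefl)
    (ex_intro2 _ _ w (conj w_neq0 Nw) erefl)) hyp_eq] := smoothC z Cz.
move: (hyperplane_eq_parallel v_neq0 hyp_eq); set c := _ / _ => wE.
exists c => //.
have c_neq0 : c != 0 by apply: contra w_neq0 => /eqP c0; rewrite wE c0 scale0r.
rewrite lt_neqAle eq_sym c_neq0 /= leNgt; apply/negP => c_lt0.
apply/negP: v_neq0; rewrite negbK; apply/eqP/(normal_cone_opp_eq0 C0 Nv).
have -> : - v = (- c^-1) *: w by rewrite wE scalerA mulNr mulVf // scaleN1r.
by apply: normal_coneZ Nw; rewrite oppr_ge0 ltW // invr_lt0.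
Qed.

Lemma closed_bdry_sub C x : closed C -> bdry C x -> C x.
Proof. by move=> clC [Cx _]; move: Cx; rewrite -(closure_id C).1. Qed.

Lemma neg_setK C : neg_set (neg_set C) = C.
Proof. by apply/funext => y; rewrite /neg_set /= opprK. Qed.

Lemma interior_neg_set C x : interior C x -> interior (neg_set C) (- x).
Proof.
move=> Cx; have /(_ C) := @oppr_continuous R 'rV[R]_n (- x).
by rewrite opprK => /(_ Cx).
Qed.

Lemma bdry_neg_set C x : closed C -> bdry C x -> bdry (neg_set C) (- x).
Proof.
move=> clC Cx; split.
  by apply: subset_closure; rewrite /neg_set /= opprK; apply: closed_bdry_sub Cx.
by case: Cx => _ Cx /interior_neg_set; rewrite neg_setK opprK.
Qed.

Lemma normal_cone_neg_set C z v :
  normal_cone C z v -> normal_cone (neg_set C) (- z) (- v).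
Proof. by move=> Nv y Cy; rewrite opprK dotvNl -dotvNr opprD Nv. Qed.

Lemma segment_of_ray a b r (c : R) :
  0 < c -> r - b = c *: (b - a) -> segment a r b.
Proof.
move=> c_gt0 /eqP; rewrite subr_eq => /eqP ->.
have c1_gt0 : 0 < 1 + c by rewrite ltr_wpDr // ltW.
exists (1 + c)^-1; first by rewrite invr_ge0 ltW //= invf_le1 // lerDl ltW.
by apply/rowP => i; rewrite !mxE; field; rewrite gt_eqF.
Qed.

Lemma strictly_convex_segment_interior C a b x :
  strictly_convex C -> C a -> C b -> segment a b x -> x != a -> x != b ->
  interior C x.
Proof.
move=> convC Ca Cb [t /andP [t_ge0 t_le1] ->] xa xb.
have [ab|ab] := eqVneq a b.
  by move: xa; rewrite ab -scalerDl subrK scale1r eqxx.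
have t_gt0 : 0 < t.
  by rewrite lt_neqAle t_ge0 andbT; apply: contraNneq xa => <-; rewrite subr0 scale0r addr0 scale1r.
have t_lt1 : t < 1.
  by rewrite lt_neqAle t_le1 andbT; apply: contraNneq xb => ->; rewrite subrr scale0r add0r scale1r.
by rewrite addrC; apply: convC => //; [rewrite eq_sym | apply/andP].
Qed.

Variables (K T : set 'rV[R]_n) (m : nat) (q p : 'I_m -> 'rV[R]_n).
Hypotheses (smoothT : smooth T) (T0 : interior T 0).
Hypotheses (q_poly : closed_polygonal q) (p_dual : dual_billiard_traj K T q p).

Lemma dual_traj_neq_next j : p j != p (ordS j).
Proof.
apply/negP => /eqP pj_eq; set k := ordS j.
have [Tpj Nj _] := p_dual j; have [_ Nk _] := p_dual k.
rewrite -/k -pj_eq in Nk.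
have [_ q_simple] := q_poly; have [_ not_seg] := q_simple k.
have [||c c_gt0 edge] := smooth_normal_cone_ray smoothT T0 Tpj _ _ Nj Nk.
- by rewrite subr_eq0 eq_sym (q_simple j).1.
- by rewrite subr_eq0 eq_sym (q_simple k).1.
by apply: not_seg; rewrite /k ordSK; apply: segment_of_ray edge.
Qed.

Lemma dual_traj_polygonal : strictly_convex T -> closed T -> closed_polygonal p.
Proof.
move=> convT clT; split; first by case: q_poly.
move=> j; split; first exact: dual_traj_neq_next.
have Tbdry i : bdry T (p i) by case: (p_dual i).
move=> seg; case: (Tbdry j) => _; apply.
apply: (strictly_convex_segment_interior convT _ _ seg).
- exact: closed_bdry_sub.
- exact: closed_bdry_sub.
- by have := dual_traj_neq_next (ord_pred j); rewrite ord_predK eq_sym.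
- exact: dual_traj_neq_next.
Qed.

End MinkowskiBilliardDuality.

Lemma dual_billiard_traj_swap (R : realType) (n : nat) (K T : set 'rV[R]_n)
  (m : nat) (q p : 'I_m -> 'rV[R]_n) :
  closed K -> (forall j, bdry K (q j)) -> dual_billiard_traj K T q p ->
  dual_billiard_traj T (neg_set K) p (fun j => - q (ordS j)).
Proof.
move=> clK Kq p_dual j; split.
- exact: bdry_neg_set clK (Kq (ordS j)).
- by have [_ _ /normal_cone_neg_set] := p_dual j; rewrite opprK.
- by have [_ Nq _] := p_dual (ordS j); rewrite opprK opprD opprK.
Qed.

Theorem proposition3p5 (R : realType) (n : nat) (K T : set 'rV[R]_n)
  (m : nat) (q p : 'I_m -> 'rV[R]_n) :
  convex_body K -> convex_body T -> strictly_convex T -> smooth T ->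
  minkowski_billiard K T q -> dual_billiard_traj K T q p ->
  [/\ closed_polygonal p,
      minkowski_billiard T (neg_set K) p &
      dual_billiard_traj T (neg_set K) p (fun j => - q (ordS j))].
Proof.
move=> [cK _ _] [cT _ T0] convT smoothT [q_poly Kq _] p_dual.
have clK : closed K by apply: compact_closed cK; apply: norm_hausdorff.
have clT : closed T by apply: compact_closed cT; apply: norm_hausdorff.
have p_poly := dual_traj_polygonal smoothT T0 q_poly p_dual convT clT.
have swapped := dual_billiard_traj_swap clK Kq p_dual.
split=> //; split=> //; last by exists (fun j => - q (ordS j)).
by move=> j; case: (p_dual j).
Qed.
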